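(* Let $S$ be a regular semigroup with apartness satisfying assumption (CD$_S$), and let $\kappa$ be a co-congruence on $S$. Then $\kappa$ is idempotent separating if and only if $\tilde{\mathcal H}\subset\kappa$.
   Context: Constructive (intuitionistic) mathematics. A semigroup with apartness is a semigroup with an apartness relation $\#$ (irreflexive, symmetric, cotransitive: $x\#z\Rightarrow(x\#y\vee y\#z)$) such that $xy\#zw\Rightarrow(x\#z\vee y\#w)$. $S$ is regular if every $a\in S$ has some $x$ with $axa=a$. A co-congruence is a relation $\kappa\subset\#$ that is symmetric, cotransitive and co-compatible: $(ax)\kappa(by)\Rightarrow(a\kappa b\vee x\kappa y)$. It is idempotent separating if $e\#f\Rightarrow e\kappa f$ for all idempotents $e,f$. $S^1=S\sqcup\{1\}$, $1$ an identity, $1\#s$ for all $s$. $a\succ_l b\Leftrightarrow\forall_{s\in S^1}(a\#sb)$; $a\succ_r b\Leftrightarrow\forall_{s\in S^1}(a\#bs)$; $\tilde{\mathcal L}=(\succ_l)\cup(\succ_l)^{-1}$, $\tilde{\mathcal R}=(\succ_r)\cup(\succ_r)^{-1}$, $\tilde{\mathcal H}=\tilde{\mathcal L}\cup\tilde{\mathcal R}$. Assumption (CD$_S$): for every predicate $P(x)$ of the form $u(x)\#v$ or $\forall_s(u(s,x)\#v)$ ($u,v$ terms built by multiplication from variables and elements of $S^1$, $x$ not occurring in $v$), and every $Q$ of the form $u\#v$, $\forall_s(u(s)\#v)$ or $\forall_{s,t}(u(s,t)\#v)$ ($x$ not occurring in $u,v$; $s,t$ not in $v$), the implication $\forall_x(P(x)\vee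 Q)\Rightarrow(\forall_xP(x))\vee Q$ holds. *)

Record ApSemigroup := {
  carrier :> Type;
  mul : carrier -> carrier -> carrier;
  ap : carrier -> carrier -> Prop;
  mulA : forall x y z, mul x (mul y z) = mul (mul x y) z;
  ap_irrefl : forall x, ~ ap x x;
  ap_sym : forall x y, ap x y -> ap y x;
  ap_cotrans : forall x y z, ap x z -> ap x y \/ ap y z;
  mul_strext : forall x y z w, ap (mul x y) (mul z w) -> ap x z \/ ap y w
}.

Arguments mul {a} _ _ : rename.
Arguments ap {a} _ _ : rename.

Section Defs.
Variable S : ApSemigroup.

Definition regular : Prop := forall a : S, exists x : S, mul (mul a x) a = a.

Definition idempotent (e : S) : Prop := mul e e = e.

(** S^1 = S + {1}; [None] is the adjoined identity 1. *)
Definition S1 := option S.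

Definition mul1 (a b : S1) : S1 :=
  match a, b with
  | None, _ => b
  | _, None => a
  | Some x, Some y => Some (mul x y)
  end.

Definition ap1 (a b : S1) : Prop :=
  match a, b with
  | None, None => False
  | None, Some _ => True
  | Some _, None => True
  | Some x, Some y => ap x y
  end.

Definition lmul1 (s : S1) (b : S) : S := match s with None => b | Some x => mul x b end.
Definition rmul1 (b : S) (s : S1) : S := match s with None => b | Some x => mul b x end.

Definition succ_l (a b : S) : Prop := forall s : S1, ap a (lmul1 s b).
Definition succ_r (a b : S) : Prop := forall s : S1, ap a (rmul1 b s).

Definition Ltilde (a b : S) : Prop := succ_l a b \/ succ_l b a.
Definition Rtilde (a b : S) : Prop := succ_r a b \/ succ_r b a.
Definition Htilde (a b : S) : Prop := Ltilde a b \/ Rtilde a b.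

Definition cocongruence (k : S -> S -> Prop) : Prop :=
  (forall a b, k a b -> ap a b) /\
  (forall a b, k a b -> k b a) /\
  (forall x y z, k x z -> k x y \/ k y z) /\
  (forall a b x y, k (mul a x) (mul b y) -> k a b \/ k x y).

Definition idempotent_separating (k : S -> S -> Prop) : Prop :=
  forall e f : S, idempotent e -> idempotent f -> ap e f -> k e f.

Inductive term (V : Type) : Type :=
| TVar (v : V)
| TConst (c : S1)
| TMul (t1 t2 : term V).

Arguments TVar {V} _.
Arguments TConst {V} _.
Arguments TMul {V} _ _.

Fixpoint eval {V : Type} (rho : V -> S1) (t : term V) : S1 :=
  match t with
  | TVar v => rho v
  | TConst c => c
  | TMul t1 t2 => mul1 (eval rho t1) (eval rho t2)
  end.

Inductive V_x := vx.
Inductive V_s := vs.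
Inductive V_sx := vs_sx | vx_sx.
Inductive V_st := vs_st | vt_st.

Definition env0 : Empty_set -> S1 := fun e => match e with end.

(** Predicates P(x): u(x) # v, or forall s, u(s,x) # v (x not in v). *)
Inductive Pform :=
| PAp (u : term V_x) (v : term Empty_set)
| PAll (u : term V_sx) (v : term V_s).

Definition Peval (p : Pform) (x : S) : Prop :=
  match p with
  | PAp u v => ap1 (eval (fun _ => Some x) u) (eval env0 v)
  | PAll u v => forall s : S1,
      ap1 (eval (fun w => match w with vs_sx => s | vx_sx => Some x end) u)
          (eval (fun _ => s) v)
  end.

(** Propositions Q (x does not occur): u # v, forall s, u(s) # v,
    forall s t, u(s,t) # v (s, t not in v). *)
Inductive Qform :=
| QAp (u v : term Empty_set)
| QAll1 (u : term V_s) (v : term Empty_set)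
| QAll2 (u : term V_st) (v : term Empty_set).

Definition Qeval (q : Qform) : Prop :=
  match q with
  | QAp u v => ap1 (eval env0 u) (eval env0 v)
  | QAll1 u v => forall s : S1, ap1 (eval (fun _ => s) u) (eval env0 v)
  | QAll2 u v => forall s t : S1,
      ap1 (eval (fun w => match w with vs_st => s | vt_st => t end) u) (eval env0 v)
  end.

Definition CD_S : Prop :=
  forall (P : Pform) (Q : Qform),
    (forall x : S, Peval P x \/ Qeval Q) -> (forall x : S, Peval P x) \/ Qeval Q.

End Defs.


(* (<=) If e # f for idempotents e, f, then cotransitivity through ef gives
   e # ef or ef # f; idempotency then yields e ≻_l f or f ≻_r e, so e H~ f.

   (=>) Let a ≻_l b and axa = a.  Put e = xa (idempotent), c = xb, let z be an
   inverse of cc and g = czc (idempotent).  Since ag = (axbzx)b and a = ae,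
   a ≻_l b gives ae # ag, hence e # g, hence e κ g.  A co-congruence cannot
   separate an idempotent e from c unless it separates c from cc, and the
   sandwich identity cc z cc = cc reduces c κ g to c κ cc; either way e κ c,
   i.e. xa κ xb, and cancelling x gives a κ b.  The case a ≻_r b is the same
   argument in the opposite semigroup. *)

Section Apartness.
Variable S : ApSemigroup.

Lemma ap_cancel_l (u a b : S) : ap (mul u a) (mul u b) -> ap a b.
Proof.
  intro H. destruct (mul_strext S _ _ _ _ H) as [Hu | Hab]; [|exact Hab].
  exfalso; exact (ap_irrefl S u Hu).
Qed.

Lemma ap_cancel_r (u a b : S) : ap (mul a u) (mul b u) -> ap a b.
Proof.
  intro H. destruct (mul_strext S _ _ _ _ H) as [Hab | Hu]; [exact Hab|].
  exfalso; exact (ap_irrefl S u Hu).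
Qed.

Lemma idempotent_ap_Htilde (e f : S) :
  idempotent S e -> idempotent S f -> ap e f -> Htilde S e f.
Proof.
  unfold idempotent. intros He Hf Hef.
  destruct (ap_cotrans S e (mul e f) f Hef) as [He_ef | Hef_f].
  - (* e ≻_l f, because sf = (sf)f *)
    left; left. intros [s|]; simpl; [|exact Hef].
    destruct (ap_cotrans S e (mul s f) _ He_ef) as [H | H]; [exact H|].
    assert (Hsff : ap (mul (mul s f) f) (mul e f)) by (rewrite <- mulA, Hf; exact H).
    apply ap_sym. exact (ap_cancel_r f _ _ Hsff).
  - (* f ≻_r e, because es = e(es) *)
    right; right. intros [s|]; simpl; [|exact (ap_sym S _ _ Hef)].
    apply ap_sym in Hef_f.
    destruct (ap_cotrans S f (mul e s) _ Hef_f) as [H | H]; [exact H|].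
    assert (Hees : ap (mul e (mul e s)) (mul e f)) by (rewrite mulA, He; exact H).
    apply ap_sym. exact (ap_cancel_l e _ _ Hees).
Qed.
End Apartness.

Section Regular.
Variable S : ApSemigroup.

Lemma regular_inverse (Hreg : regular S) (a : S) :
  exists z : S, mul (mul a z) a = a /\ mul (mul z a) z = z.
Proof.
  destruct (Hreg a) as [w Hw].
  exists (mul (mul w a) w). split.
  - replace (mul (mul a (mul (mul w a) w)) a) with (mul (mul (mul a w) a) (mul w a))
      by (rewrite !mulA; reflexivity).
    rewrite Hw, mulA. exact Hw.
  - replace (mul (mul (mul (mul w a) w) a) (mul (mul w a) w))
      with (mul (mul w (mul (mul (mul (mul a w) a) w) a)) w)
      by (rewrite !mulA; reflexivity).
    rewrite Hw, Hw. reflexivity.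
Qed.

Lemma sandwich_idempotent (c z : S) :
  mul (mul z (mul c c)) z = z -> idempotent S (mul (mul c z) c).
Proof.
  unfold idempotent. intro Hz.
  replace (mul (mul (mul c z) c) (mul (mul c z) c))
    with (mul (mul c (mul (mul z (mul c c)) z)) c) by (rewrite !mulA; reflexivity).
  rewrite Hz. reflexivity.
Qed.
End Regular.

Section Cocongruence.
Variable S : ApSemigroup.
Variable k : S -> S -> Prop.
Hypothesis Hk : cocongruence S k.

Lemma cc_irrefl (a : S) : ~ k a a.
Proof. destruct Hk as [Hap _]. intro H. exact (ap_irrefl S a (Hap _ _ H)). Qed.

Lemma cc_sym (a b : S) : k a b -> k b a.
Proof. destruct Hk as [_ [Hsym _]]. apply Hsym. Qed.

Lemma cc_cotrans (a b c : S) : k a c -> k a b \/ k b c.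
Proof. destruct Hk as [_ [_ [Hcot _]]]. apply Hcot. Qed.

Lemma cc_compat (a b x y : S) : k (mul a x) (mul b y) -> k a b \/ k x y.
Proof. destruct Hk as [_ [_ [_ Hcomp]]]. apply Hcomp. Qed.

Lemma cc_cancel_l (u a b : S) : k (mul u a) (mul u b) -> k a b.
Proof.
  intro H. destruct (cc_compat _ _ _ _ H) as [Hu | Hab]; [|exact Hab].
  exfalso; exact (cc_irrefl u Hu).
Qed.

Lemma cc_cancel_r (u a b : S) : k (mul a u) (mul b u) -> k a b.
Proof.
  intro H. destruct (cc_compat _ _ _ _ H) as [Hab | Hu]; [exact Hab|].
  exfalso; exact (cc_irrefl u Hu).
Qed.

(* If k separates c from its square, it separates c from every idempotent:
   route c κ cc through e = ee and cancel. *)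
Lemma cc_square_idempotent (e c : S) : idempotent S e -> k c (mul c c) -> k e c.
Proof.
  intros He H. destruct (cc_cotrans _ e _ H) as [Hce | Hecc].
  - exact (cc_sym _ _ Hce).
  - rewrite <- He in Hecc.
    destruct (cc_compat _ _ _ _ Hecc); assumption.
Qed.

Lemma cc_sandwich_square (c z : S) :
  mul (mul (mul c c) z) (mul c c) = mul c c ->
  k c (mul (mul c z) c) -> k c (mul c c).
Proof.
  intros Hz H.
  destruct (cc_cotrans _ (mul c c) _ H) as [Hcc | Hcc_g]; [exact Hcc|].
  rewrite <- Hz in Hcc_g.
  apply cc_sym.
  destruct (cc_cotrans _ (mul (mul (mul c c) z) c) _ Hcc_g) as [H1 | H2].
  - (* cczcc κ cczc: cancel the common left factor ccz *)
    exact (cc_cancel_l _ _ _ H1).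
  - (* cczc κ czc, i.e. (cc)(zc) κ c(zc): cancel zc *)
    replace (mul (mul (mul c c) z) c) with (mul (mul c c) (mul z c)) in H2
      by (rewrite !mulA; reflexivity).
    replace (mul (mul c z) c) with (mul c (mul z c)) in H2
      by (rewrite !mulA; reflexivity).
    exact (cc_cancel_r _ _ _ H2).
Qed.

Lemma cc_sandwich_idempotent (e c z : S) : idempotent S e ->
  mul (mul (mul c c) z) (mul c c) = mul c c ->
  k e (mul (mul c z) c) -> k e c.
Proof.
  intros He Hz H.
  destruct (cc_cotrans _ c _ H) as [Hec | Hcg]; [exact Hec|].
  exact (cc_square_idempotent _ _ He (cc_sandwich_square _ _ Hz Hcg)).
Qed.

Lemma succ_l_cocongruence (Hreg : regular S) (Hsep : idempotent_separating S k)
  (a b : S) : succ_l S a b -> k a b.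
Proof.
  intro Hab. destruct (Hreg a) as [x Hx].
  set (c := mul x b).
  destruct (regular_inverse S Hreg (mul c c)) as [z [Hz1 Hz2]].
  assert (He : idempotent S (mul x a)).
  { unfold idempotent.
    replace (mul (mul x a) (mul x a)) with (mul x (mul (mul a x) a))
      by (rewrite !mulA; reflexivity).
    rewrite Hx. reflexivity. }
  assert (Hg := sandwich_idempotent S c z Hz2).
  (* a ≻_l b with s = axbzx gives a(xa) # a(czc) *)
  assert (Hap : ap (mul x a) (mul (mul c z) c)).
  { apply (ap_cancel_l S a).
    specialize (Hab (Some (mul (mul (mul (mul a x) b) z) x))); simpl in Hab.
    rewrite mulA, Hx.
    replace (mul a (mul (mul c z) c)) with (mul (mul (mul (mul (mul a x) b) z) x) b)
      by (unfold c; rewrite !mulA; reflexivity).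
    exact Hab. }
  apply (cc_cancel_l x).
  exact (cc_sandwich_idempotent _ _ _ He Hz1 (Hsep _ _ He Hg Hap)).
Qed.
End Cocongruence.

Definition opposite (S : ApSemigroup) : ApSemigroup.
Proof.
  refine {| carrier := S; mul := fun x y => mul y x; ap := @ap S |}.
  - intros x y z. symmetry. apply mulA.
  - apply ap_irrefl.
  - apply ap_sym.
  - apply ap_cotrans.
  - intros x y z w H. destruct (mul_strext S _ _ _ _ H); auto.
Defined.

Section Opposite.
Variable S : ApSemigroup.
Variable k : S -> S -> Prop.

Lemma regular_opposite : regular S -> regular (opposite S).
Proof.
  intros Hreg a. destruct (Hreg a) as [x Hx].
  exists x. simpl. rewrite mulA. exact Hx.
Qed.

Lemma cocongruence_opposite : cocongruence S k -> cocongruence (opposite S) k.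
Proof.
  intros [Hap [Hsym [Hcot Hcomp]]].
  split; [exact Hap | split; [exact Hsym | split; [exact Hcot|]]].
  intros a b x y H. destruct (Hcomp _ _ _ _ H); auto.
Qed.

Lemma idempotent_separating_opposite :
  idempotent_separating S k -> idempotent_separating (opposite S) k.
Proof. intros Hsep e f. exact (Hsep e f). Qed.

Lemma succ_r_opposite (a b : S) : succ_r S a b -> succ_l (opposite S) a b.
Proof. intros H s. exact (H s). Qed.
End Opposite.

Lemma succ_r_cocongruence (S : ApSemigroup) (k : S -> S -> Prop)
  (Hk : cocongruence S k) (Hreg : regular S) (Hsep : idempotent_separating S k)
  (a b : S) : succ_r S a b -> k a b.
Proof.
  intro Hab.
  exact (succ_l_cocongruence (opposite S) k (cocongruence_opposite S k Hk)
    (regular_opposite S Hreg) (idempotent_separating_opposite S k Hsep)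
    a b (succ_r_opposite S a b Hab)).
Qed.

Theorem mainTheorem19 (S : ApSemigroup) (Hreg : regular S) (Hcd : CD_S S)
  (k : S -> S -> Prop) (Hk : cocongruence S k) :
  idempotent_separating S k <-> (forall a b : S, Htilde S a b -> k a b).
Proof.
  split.
  - intros Hsep a b [[Hl | Hl] | [Hr | Hr]].
    + exact (succ_l_cocongruence S k Hk Hreg Hsep a b Hl).
    + exact (cc_sym S k Hk _ _ (succ_l_cocongruence S k Hk Hreg Hsep b a Hl)).
    + exact (succ_r_cocongruence S k Hk Hreg Hsep a b Hr).
    + exact (cc_sym S k Hk _ _ (succ_r_cocongruence S k Hk Hreg Hsep b a Hr)).
  - intros HH e f He Hf Hef. exact (HH e f (idempotent_ap_Htilde S e f He Hf Hef)).
Qed.
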